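(* Let $G$ be a connected graph with $\omega(G)\in\{n(G)-1,\,n(G)-2,\,n(G)-3\}$ and $n(G)\ge \omega(G)+1\ge 4$. Then $$\dim_l(G)\le \left(\frac{\omega(G)-2}{\omega(G)-1}\right) n(G).$$
   Context: All graphs are finite and simple. $n(G)$ is the number of vertices and $\omega(G)$ the clique number of $G$. For vertices $x,y$ of a connected graph $G$, $d_G(x,y)$ is the length of a shortest $x,y$-path. A vertex $w$ distinguishes vertices $u,v$ if $d_G(u,w)\neq d_G(v,w)$. A set $W\subseteq V(G)$ is a local resolving set of $G$ if for every pair of adjacent vertices $u,v\in V(G)\setminus W$ some vertex of $W$ distinguishes $u$ and $v$. The local metric dimension $\dim_l(G)$ is the minimum cardinality of a local resolving set of $G$. *)

From mathcomp Require Import all_boot all_order all_algebra.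
Set Implicit Arguments. Unset Strict Implicit. Unset Printing Implicit Defensive.

Definition simple_graph (T : finType) (e : rel T) : Prop :=
  symmetric e /\ irreflexive e.

Definition connected_graph (T : finType) (e : rel T) : Prop :=
  forall x y : T, connect e x y.

Fixpoint ball (T : finType) (e : rel T) (k : nat) (x : T) : {set T} :=
  match k with
  | 0 => [set x]
  | k'.+1 => ball e k' x :|: [set y | [exists z in ball e k' x, e z y]]
  end.

(* shortest-path distance: least k with y within k steps of x; in a connected
   graph on #|T| vertices this k is < #|T|, so searching iota 0 #|T| suffices. *)
Definition dist (T : finType) (e : rel T) (x y : T) : nat :=
  find (fun k => y \in ball e k x) (iota 0 #|T|).

Definition is_clique (T : finType) (e : rel T) (K : {set T}) : bool :=
  [forall x in K, forall y in K, (x != y) ==> e x y].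

Definition omega (T : finType) (e : rel T) : nat :=
  \max_(K : {set T} | is_clique e K) #|K|.

Definition distinguishes (T : finType) (e : rel T) (w u v : T) : bool :=
  dist e u w != dist e v w.

Definition local_resolving (T : finType) (e : rel T) (W : {set T}) : bool :=
  [forall u, forall v,
     [&& u \notin W, v \notin W & e u v] ==>
     [exists w in W, distinguishes e w u v]].

Definition local_metric_dim (T : finType) (e : rel T) : nat :=
  \big[minn/#|T|]_(W : {set T} | local_resolving e W) #|W|.

From mathcomp Require Import all_boot all_order all_algebra.
From mathcomp Require Import zify.
Import GRing.Theory Num.Theory.

(* Deleting a vertex set S leaves a local resolving set as soon as every edge
   inside S is split by some vertex outside S, i.e. one adjacent to exactly one
   endpoint: that vertex is at distance 1 from one endpoint only.  If
   omega = n - 1, any non-edge {a, b} is such an S, so dim_l <= n - 2.  If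
   omega <= n - 2 and G is connected, some triple is such an S: otherwise a
   vertex non-adjacent to two others makes them adjacent twins, and chasing
   twins through a common neighbour of a non-edge shows that any two non-edges
   meet and that a non-edge ab has no further non-edges at both a and b, which
   forces omega >= n - 1.  So dim_l <= n - 3, and for n <= omega + 3 both
   bounds are at most (omega - 2) / (omega - 1) * n. *)

Set Implicit Arguments.
Unset Strict Implicit.
Unset Printing Implicit Defensive.

Section Graph.
Variables (T : finType) (e : rel T).

Lemma dist_eq1 x y : x != y -> (dist e x y == 1) = e x y.
Proof.
move=> xy; have : 1 < #|T| by apply/card_gt1P; exists x, y.
rewrite /dist; case: #|T| => [|[|n]] // _ /=.
rewrite !inE (eq_sym y) (negbTE xy) /=.
have -> : [exists z in [set x], e z y] = e x y.
  apply/existsP/idP => [[z /andP[/set1P -> //]]|exy].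
  by exists x; rewrite set11.
by case: (e x y).
Qed.

Lemma local_resolving_setC (S : {set T}) :
  {in S &, forall u v, e u v -> exists2 w, w \notin S & e u w != e v w} ->
  local_resolving e (~: S).
Proof.
move=> sepS; apply/forallP=> u; apply/forallP=> v; apply/implyP.
rewrite !inE !negbK => /and3P[uS vS /(sepS u v uS vS)[w wS ew]].
have [uw vw] : u != w /\ v != w by split; apply: contraNneq wS => <-.
apply/existsP; exists w; rewrite inE wS /distinguishes /=.
by apply: contra ew => /eqP dw; rewrite -dist_eq1 // dw dist_eq1.
Qed.

Lemma local_metric_dim_le W : local_resolving e W -> local_metric_dim e <= #|W|.
Proof.
move=> resW; rewrite /local_metric_dim.
have : W \in index_enum {set T} by rewrite mem_index_enum.
elim: (index_enum _) => [|V r IHr] //; rewrite inE big_cons.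
case/orP=> [/eqP <-|Wr]; first by rewrite resW geq_minl.
case: (local_resolving e V) => //; last exact: IHr.
exact: leq_trans (geq_minr _ _) (IHr Wr).
Qed.

Lemma nonedge_gt_omega (K : {set T}) : omega e < #|K| ->
  exists x y, [/\ x \in K, y \in K, x != y & ~~ e x y].
Proof.
move=> K_gt; have /forallPn[x] : ~~ is_clique e K.
  by apply: contraTN K_gt => cK; rewrite -leqNgt /omega (leq_bigmax_cond K cK).
rewrite negb_imply => /andP[xK /forallPn[y]].
by rewrite !negb_imply => /andP[yK /andP[xy nxy]]; exists x, y.
Qed.

Lemma connect_cross (C : pred T) a b : connect e a b -> C a -> ~~ C b ->
  exists x y, [/\ C x, ~~ C y & e x y].
Proof.
case/connectP=> p; elim: p a => [|y p IHp] a /=; first by move=> _ -> ->.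
case/andP=> eay py lastb Ca Cb.
have [Cy|nCy] := boolP (C y); first exact: IHp lastb Cy Cb.
by exists a, y.
Qed.

Definition resolved_edge u v s :=
  e u v ==> [exists w, [&& w != u, w != v, w != s & e u w != e v w]].

Definition resolving_triple x y z :=
  [&& x != y, x != z, y != z,
      resolved_edge x y z, resolved_edge x z y & resolved_edge y z x].

Hypotheses (e_sym : symmetric e) (e_irr : irreflexive e).

Lemma local_resolving_nonedge a b : ~~ e a b -> local_resolving e (~: [set a; b]).
Proof.
move=> nab; apply: local_resolving_setC => u v /set2P[]-> /set2P[]->;
  by rewrite ?e_irr ?(negbTE nab) // e_sym (negbTE nab).
Qed.

Lemma local_resolving_triple x y z :
  resolving_triple x y z -> local_resolving e (~: [set x; y; z]).
Proof.
case/and3P=> _ _ /and4P[_ rxy rxz ryz].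
have sep u v s : resolved_edge u v s -> e u v ->
    [set u; v; s] = [set x; y; z] ->
    exists2 w, w \notin [set x; y; z] & (e u w != e v w) && (e v w != e u w).
  move=> /implyP r /r /existsP[w /and4P[wu wv ws ew]] <-.
  by exists w; rewrite ?inE ?negb_or ?wu ?wv ?ws // ew eq_sym ew.
have Exzy : [set x; z; y] = [set x; y; z] by rewrite setUAC.
have Eyzx : [set y; z; x] = [set x; y; z] by rewrite setUC setUA.
apply: local_resolving_setC => u v; rewrite !inE.
case/orP=> [/orP[]|] /eqP-> /orP[/orP[]|] /eqP-> euv; rewrite ?e_irr // in euv *.
- by have [w ? /andP[]] := sep _ _ _ rxy euv erefl; exists w.
- by have [w ? /andP[]] := sep _ _ _ rxz euv Exzy; exists w.
- by have [w ? /andP[]] := sep _ _ _ rxy (etrans (e_sym _ _) euv) erefl; exists w.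
- by have [w ? /andP[]] := sep _ _ _ ryz euv Eyzx; exists w.
- by have [w ? /andP[]] := sep _ _ _ rxz (etrans (e_sym _ _) euv) Exzy; exists w.
- by have [w ? /andP[]] := sep _ _ _ ryz (etrans (e_sym _ _) euv) Eyzx; exists w.
Qed.

Let eq_sym_neq (u v : T) : u != v -> v != u. Proof. by rewrite eq_sym. Qed.

Section NoResolvingTriple.

Hypothesis e_conn : connected_graph e.
Hypothesis no_triple : forall x y z, ~~ resolving_triple x y z.

Lemma nonneighbours_twins x y z : x != y -> x != z -> y != z ->
  ~~ e x y -> ~~ e x z ->
  e y z /\ (forall w, w != x -> w != y -> w != z -> e y w = e z w).
Proof.
move=> xy xz yz nxy nxz; move: (no_triple x y z).
rewrite /resolving_triple xy xz yz /resolved_edge (negbTE nxy) (negbTE nxz) /=.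
rewrite negb_imply => /andP[eyz /existsPn sep]; split=> // w wx wy wz.
by move: (sep w); rewrite wx wy wz /= negbK => /eqP.
Qed.

Lemma common_neighbour a b : a != b -> ~~ e a b -> exists2 y, e a y & e b y.
Proof.
move=> ab nab.
have [||x [z []]] := connect_cross (C := fun v => (v == a) || e a v) (e_conn a b).
- by rewrite eqxx.
- by rewrite /= eq_sym (negbTE ab) (negbTE nab).
rewrite /= negb_or => /orP[/eqP->|eax] /andP[za naz] exz.
  by rewrite exz in naz.
have [/eqP zb|zb] := boolP (z == b); first by exists x; rewrite // e_sym -zb.
have xa : x != a by apply: contraTneq eax => ->; rewrite e_irr.
have [_ twins] := nonneighbours_twins ab (eq_sym_neq za) (eq_sym_neq zb) nab naz.
have xb : x != b by apply: contraNneq nab => <-.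
have xz : x != z by apply: contraTneq exz => ->; rewrite e_irr.
by exists x; rewrite // twins // e_sym.
Qed.

Lemma nonedge_dominates a b c d : a != b -> ~~ e a b ->
  c != a -> c != b -> ~~ e a c -> d != a -> d != b -> e b d.
Proof.
move=> ab nab ca cb nac da db; apply: contraT => nbd.
have nba : ~~ e b a by rewrite e_sym.
have [_ twins_bc] := nonneighbours_twins ab (eq_sym_neq ca) (eq_sym_neq cb) nab nac.
have [_ twins_ad] :=
  nonneighbours_twins (eq_sym_neq ab) (eq_sym_neq db) (eq_sym_neq da) nba nbd.
(* b, c and a, d are twins, so c splits the edge ay and d splits by. *)
have [y eay eby] := common_neighbour ab nab.
have ya : y != a by apply: contraTneq eay => ->; rewrite e_irr.
have yb : y != b by apply: contraTneq eby => ->; rewrite e_irr.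
have yc : y != c by apply: contraNneq nac => <-.
have yd : y != d by apply: contraNneq nbd => <-.
suff : resolving_triple a b y by rewrite (negbTE (no_triple a b y)).
rewrite /resolving_triple ab (eq_sym_neq ya) (eq_sym_neq yb) /resolved_edge.
rewrite (negbTE nab) eay eby /=; apply/andP; split; apply/existsP.
- exists c; rewrite ca (eq_sym_neq yc) cb (negbTE nac) /=.
  by rewrite (e_sym y) -twins_bc ?eby.
- exists d; rewrite db (eq_sym_neq yd) da (negbTE nbd) /=.
  by rewrite (e_sym y) -twins_ad ?eay.
Qed.

Lemma nonedges_meet a b c d : a != b -> ~~ e a b ->
  c != a -> c != b -> d != a -> d != b -> c != d -> e c d.
Proof.
move=> ab nab ca cb da db cd.
have ba := eq_sym_neq ab; have ac := eq_sym_neq ca; have bc := eq_sym_neq cb.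
have ad := eq_sym_neq da; have bd := eq_sym_neq db; have dc := eq_sym_neq cd.
have nba : ~~ e b a by rewrite e_sym.
have [eac|nac] := boolP (e a c);
  last exact: nonedge_dominates ac nac ba bc nab da dc.
have [ead|nad] := boolP (e a d);
  last by rewrite e_sym (nonedge_dominates ad nad ba bd nab ca cd).
have [ebc|nbc] := boolP (e b c);
  last exact: nonedge_dominates bc nbc ab ac nba db dc.
have [ebd|nbd] := boolP (e b d);
  last by rewrite e_sym (nonedge_dominates bd nbd ab ad nba cb cd).
apply: contraT => ncd.
suff : resolving_triple a b c by rewrite (negbTE (no_triple a b c)).
rewrite /resolving_triple ab ac bc /resolved_edge (negbTE nab) eac ebc /=.
apply/andP; split; apply/existsP; exists d;
  by rewrite ?ead ?ebd (negbTE ncd) ?da ?db dc.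
Qed.

Lemma card_leq_omegaS : #|T| <= (omega e).+1.
Proof.
rewrite leqNgt; apply/negP => omega_lt.
have other_nonedge u v : u != v -> ~~ e u v ->
    exists2 c, (c != u) && (c != v) & ~~ e u c.
  move=> uv nuv; have : omega e < #|[set~ v]| by rewrite cardsC1; lia.
  case/nonedge_gt_omega=> c [d [cv dv cd ncd]]; rewrite !in_setC1 in cv dv.
  have [/eqP cu|cu] := boolP (c == u).
    by exists d; rewrite -cu // eq_sym cd dv.
  have [/eqP du|du] := boolP (d == u).
    by exists c; rewrite -du ?cd ?cv // e_sym.
  by rewrite (nonedges_meet uv nuv cu cv du dv cd) in ncd.
have : omega e < #|[set: T]| by rewrite cardsT; lia.
case/nonedge_gt_omega=> a [b [_ _ ab nab]].
have nba : ~~ e b a by rewrite e_sym.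
have [c /andP[cb ca] nbc] := other_nonedge b a (eq_sym_neq ab) nba.
have [c' /andP[c'a c'b] nac'] := other_nonedge a b ab nab.
by rewrite (nonedge_dominates ab nab c'a c'b nac' ca cb) in nbc.
Qed.

End NoResolvingTriple.

Lemma exists_resolving_triple : connected_graph e -> (omega e).+2 <= #|T| ->
  exists x y z, resolving_triple x y z.
Proof.
move=> e_conn omega_lt.
have [/existsP[x /existsP[y /existsP[z r]]]|none] :=
  boolP [exists x, exists y, exists z, resolving_triple x y z].
  by exists x, y, z.
suff : #|T| <= (omega e).+1 by rewrite leqNgt omega_lt.
apply: card_leq_omegaS e_conn _ => x y z.
apply: contra none => r; apply/existsP; exists x.
by apply/existsP; exists y; apply/existsP; exists z.
Qed.

Lemma local_metric_dim_le_subn2 : omega e < #|T| -> local_metric_dim e <= #|T| - 2.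
Proof.
rewrite -cardsT => /nonedge_gt_omega[a [b [_ _ ab nab]]].
apply: leq_trans (local_metric_dim_le (local_resolving_nonedge nab)) _.
by have := cardsC [set a; b]; rewrite cards2 ab cardsT; lia.
Qed.

Lemma local_metric_dim_le_subn3 : connected_graph e -> (omega e).+2 <= #|T| ->
  local_metric_dim e <= #|T| - 3.
Proof.
move=> e_conn /(exists_resolving_triple e_conn)[x [y [z r]]].
apply: leq_trans (local_metric_dim_le (local_resolving_triple r)) _.
case/and3P: r => xy xz /andP[yz _]; have := cardsC [set x; y; z].
rewrite [in #|[set x; y; z]|]setUC cardsU1 cards2 !inE.
by rewrite !(eq_sym z) (negbTE xz) (negbTE yz) xy; lia.
Qed.

End Graph.

Lemma ler_ratio_nat (R : realFieldType) (d n w : nat) : 1 < w ->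
  d * (w - 1) <= n * (w - 2) -> (d%:R <= (w%:R - 2) / (w%:R - 1) * n%:R :> R)%R.
Proof.
move=> w_gt1 le_dwn.
have w1_gt0 : (0 < w%:R - 1 :> R)%R by rewrite subr_gt0 ltr1n.
rewrite mulrAC ler_pdivlMr // -(natrB _ (ltnW w_gt1)) -(natrB _ w_gt1).
by rewrite -!natrM ler_nat (mulnC _ n).
Qed.

Theorem corollary3p2 (T : finType) (e : rel T) :
  simple_graph e -> connected_graph e ->
  (omega e == #|T| - 1) || (omega e == #|T| - 2) || (omega e == #|T| - 3) ->
  (4 <= (omega e).+1 <= #|T|) ->
  ((local_metric_dim e)%:R <=
     (((omega e)%:R - 2) / ((omega e)%:R - 1)) * (#|T|)%:R :> rat)%R.
Proof.
move=> [e_sym e_irr] e_conn omega_cases /andP[omega_ge3 omega_lt].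
have omega_ge : #|T| <= omega e + 3 by case/orP: omega_cases => [/orP[]|] /eqP; lia.
apply: ler_ratio_nat; first lia.
have [omega_le|omega_eq] := ltnP (omega e).+1 #|T|.
- have dim_le := local_metric_dim_le_subn3 e_sym e_irr e_conn omega_le.
  by apply: leq_trans (leq_mul dim_le (leqnn _)) _; nia.
- have dim_le := local_metric_dim_le_subn2 e_sym e_irr omega_lt.
  by apply: leq_trans (leq_mul dim_le (leqnn _)) _; nia.
Qed.
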